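(* A subset $A$ of nonzero elements of a real normed space $X$ is topologically linearly independent if and only if it is uniformly minimal.
   Context: $X$ carries its norm topology. A subset $A\subseteq X\setminus\{0\}$ is topologically linearly independent if for every neighborhood $W$ of $0$ there is a neighborhood $U$ of $0$ such that for every finite $F\subseteq A$ and reals $\{r_a: a\in F\}$, $\sum_{a\in F}r_a a\in U$ implies $r_a a\in W$ for all $a\in F$. A subset $A\subseteq X\setminus\{0\}$ is uniformly minimal if there exists $K>0$ such that for every $a\in A$, $\operatorname{dist}\bigl(a/\|a\|,\ \overline{\langle A\setminus\{a\}\rangle_{\mathbb{R}}}\bigr)\ge K$, where $\langle\cdot\rangle_{\mathbb{R}}$ denotes linear span and the bar denotes norm closure. *)

From HB Require Import structures.
From mathcomp Require Import all_boot all_order all_algebra.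
From mathcomp Require Import all_classical all_reals all_analysis.
Set Implicit Arguments. Unset Strict Implicit. Unset Printing Implicit Defensive.
Import Order.TTheory GRing.Theory Num.Theory.
Import numFieldNormedType.Exports.
Local Open Scope classical_set_scope.
Local Open Scope ring_scope.

Definition lin_span (R : realType) (X : normedModType R) (S : set X) : set X :=
  [set x | exists (s : seq X) (r : X -> R),
      (forall y, y \in s -> S y) /\ x = \sum_(y <- s) r y *: y].

Definition dist_to (R : realType) (X : normedModType R) (x : X) (S : set X) : R :=
  inf [set `|x - y| | y in S].

(* Topological linear independence. Finite subsets F are given as duplicate-free
   sequences. *)
Definition top_lin_indep (R : realType) (X : normedModType R) (A : set X) : Prop :=
  forall W : set X, nbhs (0 : X) W ->
  exists U : set X, nbhs (0 : X) U /\
    forall (F : seq X) (r : X -> R),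
      uniq F -> (forall a, a \in F -> A a) ->
      U (\sum_(a <- F) r a *: a) ->
      forall a, a \in F -> W (r a *: a).

Definition uniformly_minimal (R : realType) (X : normedModType R) (A : set X) : Prop :=
  exists K : R, 0 < K /\
    forall a, A a ->
      K <= dist_to ((`|a|)^-1 *: a) (closure (lin_span (A `\ a))).

From HB Require Import structures.
From mathcomp Require Import all_boot all_order all_algebra.
From mathcomp Require Import all_classical all_reals all_analysis.
Import Order.TTheory GRing.Theory Num.Theory.
Import numFieldNormedType.Exports.
Local Open Scope classical_set_scope.
Local Open Scope ring_scope.

(* Both directions rest on one identity: for a in F and c := r_a |a|,
     sum_(b in F) r_b b = c (a/|a| - z),  z := - sum_(b in F, b <> a) (r_b / c) b,
   with z in the span of A \ {a}.  Uniform minimality with constant K thus gives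
   K |r_a a| <= |sum_F r_b b|, which is topological linear independence with
   U := ball of radius e K for W := ball of radius e.  Conversely, if U inside the
   d-ball witnesses independence for W the unit ball, then a point z of the span
   of A \ {a} with |a/|a| - z| < d would give the combination a/|a| - z in U whose
   a-term a/|a| has norm 1, so a/|a| stays at distance >= d from that span and
   hence from its closure. *)

Section NormedSpace.
Variables (R : realType) (X : normedModType R).

Lemma nbhs0_normP (W : set X) :
  nbhs (0 : X) W -> exists2 e : R, 0 < e & forall y : X, `|y| < e -> W y.
Proof. by move=> /nbhs_norm0P [e e0 eW]; exists e => // y /eW. Qed.

Lemma nbhs0_norm_lt {e : R} : 0 < e -> nbhs (0 : X) [set y : X | `|y| < e].
Proof. by move=> e0; apply/nbhs_norm0P; exists e. Qed.

Lemma norm_normalize (a : X) : a != 0 -> `| `|a|^-1 *: a| = 1.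
Proof. by move=> a0; rewrite normrZ normfV normr_id mulVf // normr_eq0. Qed.

Lemma lin_span0 (S : set X) : lin_span S 0.
Proof. by exists [::], (fun=> 0); rewrite big_nil. Qed.

Lemma lin_span_uniq (S : set X) (z : X) : lin_span S z ->
  exists (s : seq X) (r : X -> R),
    [/\ uniq s, (forall y, y \in s -> S y) & z = \sum_(y <- s) r y *: y].
Proof.
move=> [s [r [sS ->]]].
exists (undup s), (fun y => (count_mem y s)%:R * r y); split.
- exact: undup_uniq.
- by move=> y; rewrite mem_undup; apply: sS.
rewrite -big_undup_iterop_count; apply: eq_bigr => y _.
by rewrite Monoid.iteropE iter_addr_0 -scalerA scaler_nat.
Qed.

Lemma dist_to_le (S : set X) (x z : X) : S z -> dist_to x S <= `|x - z|.
Proof.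
move=> Sz; apply: ge_inf; last by exists z.
by exists 0 => _ [y _ <-].
Qed.

Lemma dist_to_closure_ge (S : set X) (x : X) (d : R) : S !=set0 ->
  (forall z, S z -> d <= `|x - z|) -> d <= dist_to x (closure S).
Proof.
move=> [z0 Sz0] dS; apply: lb_le_inf.
  by exists `|x - z0|, z0 => //; apply: subset_closure.
move=> _ [y Sy <-]; rewrite leNgt; apply/negP => xy.
have e0 : 0 < d - `|x - y| by rewrite subr_gt0.
have [z [Sz yz]] := Sy _ (nbhsx_ballx y _ e0).
rewrite -ball_normE /ball_ /= in yz.
have := ler_normD (x - y) (y - z); rewrite addrA subrK => xz.
have : `|x - z| < d by apply: le_lt_trans xz _; rewrite -ltrBrDl.
by rewrite ltNge dS.
Qed.

Section LinIndep.
Variable A : set X.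

Lemma uniformly_minimal_coef_le {K : R} {F : seq X} {r : X -> R} {a : X} :
  (forall b, A b -> K <= dist_to (`|b|^-1 *: b) (closure (lin_span (A `\ b)))) ->
  uniq F -> (forall b, b \in F -> A b) ->
  a \in F -> K * `|r a *: a| <= `|\sum_(b <- F) r b *: b|.
Proof.
move=> HK uF FA aF.
set c := r a * `|a|.
have nra : `|r a *: a| = `|c| by rewrite normrZ normrM normr_id.
rewrite nra; have [->|c0] := eqVneq c 0; first by rewrite normr0 mulr0.
have a0 : a != 0 by apply: contraNneq c0 => a0; rewrite /c a0 normr0 mulr0.
set y := \sum_(b <- rem a F) r b *: b.
pose z := \sum_(b <- rem a F) (- (c^-1 * r b)) *: b.
have span_z : lin_span (A `\ a) z.
  exists (rem a F), (fun b => - (c^-1 * r b)); split => // b.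
  rewrite (mem_rem_uniq _ uF) => /andP [ba bF]; split; first exact: FA.
  by move=> /= bae; rewrite bae eqxx in ba.
have sumE : \sum_(b <- F) r b *: b = c *: (`|a|^-1 *: a - z).
  have -> : z = - (c^-1 *: y).
    by rewrite scaler_sumr -sumrN; apply: eq_bigr => b _; rewrite scalerA scaleNr.
  rewrite (big_rem a aF) opprK scalerDr [c *: (c^-1 *: y)]scalerA mulfV // scale1r.
  by rewrite scalerA /c -mulrA mulfV ?normr_eq0 // mulr1.
have Kz : K <= `| `|a|^-1 *: a - z|.
  apply: le_trans (HK _ (FA _ aF)) _.
  by apply: dist_to_le; apply: subset_closure span_z.
by rewrite sumE (normrZ c) mulrC ler_wpM2l.
Qed.

Lemma uniformly_minimal_top_lin_indep :
  uniformly_minimal A -> top_lin_indep A.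
Proof.
move=> [K [K0 HK]] W /nbhs0_normP [e e0 eW].
exists [set y : X | `|y| < e * K]; split; first exact: nbhs0_norm_lt (mulr_gt0 e0 K0).
move=> F r uF FA small a aF; apply: eW.
rewrite -(ltr_pM2r K0) mulrC.
exact: le_lt_trans (uniformly_minimal_coef_le HK uF FA aF) small.
Qed.

Hypothesis A_neq0 : A `<=` [set x | x != 0].

Lemma top_lin_indep_far_from_span : top_lin_indep A ->
  exists2 d : R, 0 < d & forall a z, A a -> lin_span (A `\ a) z ->
    d <= `| `|a|^-1 *: a - z|.
Proof.
move=> indep.
have [U [/nbhs0_normP [d d0 dU] HU]] := indep _ (nbhs0_norm_lt ltr01).
exists d => // a z Aa /lin_span_uniq [s [r [us sA ->]]].
rewrite leNgt; apply/negP => near_a.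
have a0 : a != 0 := A_neq0 _ Aa.
have as_ : a \notin s by apply/negP => /sA [_ /eqP]; rewrite eqxx.
pose r' b := if b == a then `|a|^-1 else - r b.
have uas : uniq (a :: s) by rewrite /= as_ us.
have asA b : b \in a :: s -> A b by rewrite in_cons => /orP [/eqP -> | /sA []].
have sumE : \sum_(b <- a :: s) r' b *: b = `|a|^-1 *: a - \sum_(b <- s) r b *: b.
  rewrite big_cons /r' eqxx -sumrN; congr (_ + _); apply: eq_big_seq => b bs.
  by rewrite ifN ?scaleNr //; apply: contraNneq as_ => <-.
have Usum : U (\sum_(b <- a :: s) r' b *: b) by rewrite sumE; exact: dU.
have := HU _ r' uas asA Usum a (mem_head _ _).
by rewrite /r' eqxx /= norm_normalize // ltxx.
Qed.

Lemma top_lin_indep_uniformly_minimal :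
  top_lin_indep A -> uniformly_minimal A.
Proof.
move=> /top_lin_indep_far_from_span [d d0 far].
exists d; split => // a Aa.
by apply: dist_to_closure_ge; [exists 0; apply: lin_span0 | move=> z; apply: far].
Qed.

End LinIndep.
End NormedSpace.

Theorem theorem4p5 (R : realType) (X : normedModType R) (A : set X)
  (hA : A `<=` [set x | x != 0]) :
  top_lin_indep A <-> uniformly_minimal A.
Proof.
split; first exact: top_lin_indep_uniformly_minimal hA.
exact: uniformly_minimal_top_lin_indep.
Qed.
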